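(* Fix an integer $d\geq 2$ and $k\in\{2,\ldots,d\}$, and let $X\subseteq S^{d-1}\subseteq\mathbb{R}^d$ be a set of unit vectors with $|X|=d+k$ such that $\max\{\langle x,y\rangle:x,y\in X,\ x\neq y\}=0$. Then there exist a possibly empty subset $X_0\subseteq X$ and a partition $X_1\sqcup\cdots\sqcup X_l=X\setminus X_0$ with $l\geq k$ such that (i) $|X_0|=\dim\operatorname{span}X_0$, (ii) $|X_i|=\dim\operatorname{span}X_i+1$ for each $i\in\{1,\ldots,l\}$, and (iii) $\operatorname{span}X_i\perp\operatorname{span}X_j$ whenever $i\neq j$ (with $i,j\in\{0,1,\ldots,l\}$).
   Context: For any $X\subseteq S^{d-1}$ with $|X|\geq d+2$ one always has $\max\{\langle x,y\rangle:x\neq y\}\geq 0$ (Rankin's orthoplex bound); the hypothesis says $X$ achieves equality in this bound. *)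

From HB Require Import structures.
From mathcomp Require Import all_boot all_order all_algebra.
From mathcomp Require Import finmap.
From mathcomp Require Import reals.
Set Implicit Arguments. Unset Strict Implicit. Unset Printing Implicit Defensive.
Import Order.TTheory GRing.Theory Num.Theory.
Local Open Scope ring_scope.

Definition dotp (R : realType) (d : nat) (u v : 'rV[R]_d) : R :=
  \sum_(i < d) u ord0 i * v ord0 i.

Definition fspan (R : realType) (d : nat) (S : {fset 'rV[R]_d}) : {vspace 'rV[R]_d} :=
  <<(enum_fset S)>>%VS.

Definition span_orth (R : realType) (d : nat) (S T : {fset 'rV[R]_d}) : Prop :=
  forall u v, u \in fspan S -> v \in fspan T -> dotp u v = 0.

From HB Require Import structures.
From mathcomp Require Import all_boot all_order all_algebra.
From mathcomp Require Import finmap.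
From mathcomp Require Import reals.
From mathcomp Require Import zify.
From Stdlib Require Import Classical.
Set Implicit Arguments. Unset Strict Implicit. Unset Printing Implicit Defensive.
Import Order.TTheory GRing.Theory Num.Theory.
Local Open Scope ring_scope.
Local Open Scope fset_scope.

(* If an obtuse set is linearly dependent, the positive and the
   negative part of a nontrivial relation have nonpositive inner product, yet
   they are equal up to sign; so the positive part vanishes and some nonempty
   subset J carries a relation with only positive coefficients.  Take J minimal:
   then J minus any point is independent, whence |J| = dim span J + 1, and
   pairing the positive relation with any y outside J shows that J is orthogonal
   to the rest of the set.  Peeling off such blocks until an independent set X0
   remains gives the decomposition, and |X| = dim span X + l <= d + l. *)

Section ObtuseDecomposition.
Local Open Scope ring_scope.
Variables (R : realType) (d : nat).
Local Notation V := 'rV[R]_d.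
Implicit Types (u v x y : V) (S T X Y I J : {fset V}).

Lemma dotpC u v : dotp u v = dotp v u.
Proof. by apply: eq_bigr => i _; rewrite mulrC. Qed.

Lemma dotpDl u v y : dotp (u + v) y = dotp u y + dotp v y.
Proof. by rewrite /dotp -big_split; apply: eq_bigr => i _; rewrite mxE mulrDl. Qed.

Lemma dotpZl (a : R) u y : dotp (a *: u) y = a * dotp u y.
Proof. by rewrite /dotp mulr_sumr; apply: eq_bigr => i _; rewrite mxE mulrA. Qed.

Lemma dotp0l y : dotp 0 y = 0.
Proof. by rewrite /dotp big1 // => i _; rewrite mxE mul0r. Qed.

Lemma dotp_suml (I : Type) (r : seq I) (P : pred I) (F : I -> V) y :
  dotp (\sum_(i <- r | P i) F i) y = \sum_(i <- r | P i) dotp (F i) y.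
Proof.
by apply: (big_morph (fun u => dotp u y)) => [u v|]; rewrite ?dotpDl ?dotp0l.
Qed.

Lemma dotpp_ge0 u : 0 <= dotp u u.
Proof. by apply: sumr_ge0 => i _; rewrite -expr2 sqr_ge0. Qed.

Lemma dotpp_eq0 u : dotp u u = 0 -> u = 0.
Proof.
move=> /psumr_eq0P u0; apply/rowP => i; rewrite mxE.
by have /eqP := u0 (fun j _ => sqr_ge0 (u ord0 j)) i isT; rewrite mulf_eq0 orbb => /eqP.
Qed.

Lemma span_orth_gen S T :
  (forall x y, x \in S -> y \in T -> dotp x y = 0) -> span_orth S T.
Proof.
move=> orthST u v Su Tv.
rewrite (coord_span (X := in_tuple (enum_fset S)) Su).
rewrite (coord_span (X := in_tuple (enum_fset T)) Tv).
rewrite dotp_suml big1 // => i _; rewrite dotpZl dotpC dotp_suml big1 ?mulr0 // => j _.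
by rewrite dotpZl dotpC orthST ?mulr0 ?mem_nth.
Qed.

Lemma span_orthC S T : span_orth S T -> span_orth T S.
Proof. by move=> orthST u v Tu Sv; rewrite dotpC orthST. Qed.

Lemma span_orthSr S T T' : T' `<=` T -> span_orth S T -> span_orth S T'.
Proof.
move=> /fsubsetP T'T orthST u v Su /(subvP (sub_span T'T)); exact: orthST.
Qed.

Lemma dim_fspan_orth_split X J : J `<=` X -> span_orth J (X `\` J) ->
  \dim (fspan X) = (\dim (fspan J) + \dim (fspan (X `\` J)))%N.
Proof.
move=> /fsubsetP JX orthJ; rewrite -dimv_disjoint_sum.
  rewrite /fspan -span_cat; congr (\dim _); apply: eq_span => z.
  rewrite mem_cat in_fsetD; by case: (boolP (z \in J)) => [/JX|].
apply/eqP; rewrite -subv0; apply/subvP => v /memv_capP [Jv XJv].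
by rewrite memv0; apply/eqP/dotpp_eq0/orthJ.
Qed.

Definition indep S := forall a : V -> R,
  \sum_(x <- S) a x *: x = 0 -> forall x, x \in S -> a x = 0.

Lemma indepE S : indep S <-> #|` S| = \dim (fspan S).
Proof.
set s := enum_fset S; have uniq_s : uniq s := fset_uniq S.
have -> : (#|` S| = \dim (fspan S)) <-> free (in_tuple s).
  by rewrite /free /fspan /=; split=> [eq_dim|/eqP eq_dim]; rewrite -eq_dim.
split => [indepS | /freeP freeS].
  apply/freeP => k rel_k i.
  pose a x := \sum_(j < size s | s`_j == x) k j.
  have a_nth (j : 'I_(size s)) : a s`_j = k j.
    by rewrite /a (big_pred1 j) // => j'; rewrite /= nth_uniq.
  rewrite -a_nth; apply: indepS; last exact: mem_nth.
  by rewrite (big_nth 0) big_mkord -[RHS]rel_k; apply: eq_bigr => j _; rewrite a_nth.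
move=> a rel_a x Sx; have ix : (index x s < size s)%N by rewrite index_mem.
rewrite -(nth_index 0 Sx) -[index _ _]/(nat_of_ord (Ordinal ix)).
by apply: (freeS (fun j => a s`_j)); rewrite -[RHS]rel_a (big_nth 0) big_mkord.
Qed.

Lemma exists_nontrivial_relation S : ~ indep S ->
  exists2 a : V -> R, \sum_(x <- S) a x *: x = 0 & exists2 x, x \in S & a x != 0.
Proof.
move=> depS; apply: NNPP => no_rel; apply: depS => a rel_a x Sx.
by apply/eqP; apply: contra_notT no_rel => ax_neq0; exists a => //; exists x.
Qed.

Definition obtuse X := forall x y, x \in X -> y \in X -> x != y -> dotp x y <= 0.

Lemma obtuseS X Y : Y `<=` X -> obtuse X -> obtuse Y.
Proof. by move=> /fsubsetP YX obtX x y /YX Xx /YX; apply: obtX. Qed.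

Lemma dotp_obtuse_comb_le0 X S T (a c : V -> R) :
  obtuse X -> S `<=` X -> T `<=` X -> [disjoint S & T] ->
  (forall x, x \in S -> 0 <= a x) -> (forall y, y \in T -> 0 <= c y) ->
  dotp (\sum_(x <- S) a x *: x) (\sum_(y <- T) c y *: y) <= 0.
Proof.
move=> obtX /fsubsetP SX /fsubsetP TX /fdisjointP ST a_ge0 c_ge0.
rewrite dotp_suml big_seq; apply: sumr_le0 => x Sx.
rewrite dotpZl dotpC dotp_suml big_seq mulr_ge0_le0 ?a_ge0 //.
apply: sumr_le0 => y Ty; rewrite dotpZl dotpC mulr_ge0_le0 ?c_ge0 //.
apply: obtX; [exact: SX | exact: TX | apply: contraTneq Ty => <-; exact: ST].
Qed.

Definition posdep S := exists2 a : V -> R,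
  forall x, x \in S -> 0 < a x & \sum_(x <- S) a x *: x = 0.

Lemma exists_posdep X : obtuse X -> ~ indep X ->
  exists2 I, I `<=` X & I != fset0 /\ posdep I.
Proof.
move=> obtX /exists_nontrivial_relation [a rel_a [x Xx ax_neq0]].
wlog ax_gt0 : a rel_a ax_neq0 / 0 < a x.
  move=> posCase; case: (ltrgtP (a x) 0) => [ax_lt0|ax_gt0|ax_eq0].
  - apply: (posCase (fun z => - a z)); rewrite ?oppr_eq0 ?oppr_gt0 //.
    by under eq_bigr do rewrite scaleNr; rewrite sumrN rel_a oppr0.
  - exact: (posCase a).
  - by rewrite ax_eq0 eqxx in ax_neq0.
pose P := [fset z in X | 0 < a z]; pose N := [fset z in X | ~~ (0 < a z)].
set sP := \sum_(z <- P) a z *: z.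
have sPE : sP = \sum_(z <- N) (- a z) *: z.
  under eq_bigr do rewrite scaleNr.
  by apply/eqP; rewrite sumrN -addr_eq0 /sP -big_fsetID rel_a.
have sP0 : sP = 0.
  apply/dotpp_eq0/eqP; rewrite eq_le dotpp_ge0 andbT {2}sPE /sP.
  apply: (@dotp_obtuse_comb_le0 X P N a (fun z => - a z) obtX); rewrite ?fset_sub //.
  - by apply/fdisjointP => z; rewrite !inE => /andP[_ ->]; rewrite andbF.
  - by move=> z; rewrite !inE => /andP[_ /ltW].
  - by move=> z; rewrite !inE oppr_ge0 -leNgt => /andP[].
exists P; first exact: fset_sub.
split; first by apply/fset0Pn; exists x; rewrite !inE Xx.
by exists a => [z|//]; rewrite !inE => /andP[].
Qed.

Lemma posdep_orth X I : obtuse X -> I `<=` X -> posdep I ->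
  span_orth I (X `\` I).
Proof.
move=> obtX /fsubsetP IX [a a_gt0 rel_a]; apply: span_orth_gen => x y Ix.
move=> /fsetDP[Xy Iy].
have : \sum_(z <- I) a z * dotp z y == 0.
  apply/eqP; rewrite -[RHS](dotp0l y) -rel_a dotp_suml.
  by apply: eq_bigr => z _; rewrite dotpZl.
rewrite -oppr_eq0 -sumrN big_seq psumr_eq0 => [/allP/(_ x Ix)|z Iz].
  by rewrite Ix oppr_eq0 mulf_eq0 gt_eqF ?a_gt0 //= => /eqP.
rewrite oppr_ge0; apply: mulr_ge0_le0; first exact: ltW (a_gt0 z Iz).
by apply: obtX; [exact: IX | exact: Xy | apply: contraNneq Iy => <-].
Qed.

Definition minimal_posdep J :=
  [/\ J != fset0, posdep J & forall x, x \in J -> indep (J `\ x)].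

Lemma exists_minimal_posdep X : obtuse X -> ~ indep X ->
  exists2 J, J `<=` X & minimal_posdep J.
Proof.
have [n] := ubnP #|` X|; elim: n X => // n IH X card_lt obtX depX.
have [I IX [I_neq0 posI]] := exists_posdep obtX depX.
have [[x Ix depIx]|nodep] :=
  classic (exists2 x, x \in I & ~ indep (I `\ x)); last first.
  by exists I => //; split=> // x Ix; apply: NNPP => depIx; apply: nodep; exists x.
have IxX := fsubset_trans (fsubD1set I x) IX.
have [|J JIx minJ] := IH (I `\ x) _ (obtuseS IxX obtX) depIx.
  apply: (@leq_trans #|` X|); last by rewrite -ltnS.
  by apply: leq_trans _ (fsubset_leq_card IX); rewrite (cardfsD1 x I) Ix.
by exists J => //; apply: fsubset_trans JIx IxX.
Qed.

Lemma card_minimal_posdep J : minimal_posdep J -> #|` J| = (\dim (fspan J)).+1.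
Proof.
move=> [/fset0Pn [x Jx] [a a_gt0 rel_a] minJ].
have dim_lt : (\dim (fspan J) < #|` J|)%N.
  rewrite ltn_neqAle dim_span andbT; apply/eqP => /esym /indepE indepJ.
  by move: (indepJ a rel_a x Jx); apply/eqP; rewrite gt_eqF ?a_gt0.
have dim_ge : (#|` J `\ x| <= \dim (fspan J))%N.
  rewrite (indepE _).1; last exact: minJ.
  by apply: (dimvS (sub_span _)) => z; rewrite /= in_fsetD1 => /andP[].
by apply/eqP; rewrite eqn_leq dim_lt andbT (cardfsD1 x J) Jx.
Qed.

Definition fpartition X X0 (s : seq {fset V}) :=
  [/\ X0 `<=` X,
      forall i j, (i < size s)%N -> (j < size s)%N -> i != j ->
        [disjoint nth fset0 s i & nth fset0 s j]
    & forall x, x \in X `\` X0 <-> exists2 i, (i < size s)%N & x \in nth fset0 s i].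

Lemma fpartition_block_sub X X0 s i : fpartition X X0 s -> (i < size s)%N ->
  nth fset0 s i `<=` X `\` X0.
Proof.
by move=> [_ _ cover] lt_i; apply/fsubsetP => x si_x; apply/cover; exists i.
Qed.

Lemma fpartition_cons X J X0 s : J `<=` X ->
  fpartition (X `\` J) X0 s -> fpartition X X0 (J :: s).
Proof.
move=> /fsubsetP JX partXJ; have [X0XJ disj cover] := partXJ.
have block_XJ i : (i < size s)%N -> {subset nth fset0 s i <= X `\` J}.
  move=> lt_i x /(fsubsetP (fpartition_block_sub partXJ lt_i)).
  by rewrite in_fsetD => /andP[].
split.
- by apply: fsubset_trans X0XJ (fsubsetDl _ _).
- move=> [|i] [|j] //= lt_i lt_j ij; last exact: disj.
  + by apply/fdisjointP => x Jx; apply: contraL Jx => /block_XJ /fsetDP[].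
  + by apply/fdisjointP => x /block_XJ-/(_ lt_i) /fsetDP[].
move=> x; split.
- move=> /fsetDP[Xx X0x]; case: (boolP (x \in J)) => [Jx|Jx]; first by exists 0%N.
  have [|i lt_i si_x] := (cover x).1; first by rewrite !in_fsetD X0x Jx Xx.
  by exists i.+1.
- move=> [[|i] /= lt_i si_x].
    rewrite in_fsetD JX // andbT; apply: contraL si_x => /(fsubsetP X0XJ).
    by rewrite in_fsetD => /andP[].
  have := (cover x).2 (ex_intro2 _ _ i lt_i si_x).
  by rewrite !in_fsetD => /andP[-> /andP[]].
Qed.

Definition orthogonal_blocks X0 (s : seq {fset V}) :=
  (forall i, (i < size s)%N -> span_orth X0 (nth fset0 s i)) /\
  (forall i j, (i < size s)%N -> (j < size s)%N -> i != j ->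
     span_orth (nth fset0 s i) (nth fset0 s j)).

Lemma orthogonal_blocks_cons X J X0 s :
  fpartition (X `\` J) X0 s -> span_orth J (X `\` J) ->
  orthogonal_blocks X0 s -> orthogonal_blocks X0 (J :: s).
Proof.
move=> partXJ orthJ [orth0 orth].
have orthJs i : (i < size s)%N -> span_orth J (nth fset0 s i).
  move=> lt_i; apply: span_orthSr orthJ.
  exact: fsubset_trans (fpartition_block_sub partXJ lt_i) (fsubsetDl _ _).
split=> [[|i] /= lt_i|[|i] [|j] //= lt_i lt_j ij].
- have [X0XJ _ _] := partXJ; exact/span_orthC/(span_orthSr X0XJ).
- exact: orth0.
- exact: orthJs.
- exact/span_orthC/orthJs.
- exact: orth.
Qed.

Definition decomposition X X0 (s : seq {fset V}) :=
  [/\ fpartition X X0 s,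
      #|` X0| = \dim (fspan X0),
      forall i, (i < size s)%N ->
        #|` nth fset0 s i| = (\dim (fspan (nth fset0 s i))).+1,
      orthogonal_blocks X0 s
    & #|` X| = (\dim (fspan X) + size s)%N].

Lemma indep_decomposition X : indep X -> decomposition X X [::].
Proof.
move=> /indepE cardX; split; rewrite ?addn0 //.
split=> // x; rewrite in_fsetD andNb; split=> [//|[]//].
Qed.

Lemma decomposition_cons X J X0 s : J `<=` X -> minimal_posdep J ->
  span_orth J (X `\` J) -> decomposition (X `\` J) X0 s ->
  decomposition X X0 (J :: s).
Proof.
move=> JX minJ orthJ [partXJ cardX0 cards orth cardXJ]; split=> //.
- exact: fpartition_cons.
- by move=> [|i] /=; [move=> _; apply: card_minimal_posdep | apply: cards].
- exact: (orthogonal_blocks_cons partXJ orthJ orth).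
have cardX : #|` X| = (#|` J| + #|` X `\` J|)%N.
  by rewrite cardfsDS // subnKC // fsubset_leq_card.
rewrite cardX cardXJ (dim_fspan_orth_split JX orthJ) (card_minimal_posdep minJ).
by rewrite addSn addnS addnA.
Qed.

Lemma obtuse_decomposition X : obtuse X -> exists X0 s, decomposition X X0 s.
Proof.
have [n] := ubnP #|` X|; elim: n X => // n IH X card_lt obtX.
have [indepX|depX] := classic (indep X).
  by exists X, [::]; apply: indep_decomposition.
have [J JX minJ] := exists_minimal_posdep obtX depX.
have [J_neq0 posJ _] := minJ.
have [|X0 [s decXJ]] := IH (X `\` J) _ (obtuseS (fsubsetDl X J) obtX).
  rewrite -cardfs_gt0 in J_neq0; have := fsubset_leq_card JX.
  by rewrite cardfsDS //; lia.
exists X0, (J :: s); apply: decomposition_cons => //.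
exact: posdep_orth.
Qed.

End ObtuseDecomposition.

Theorem theorem2p2 (R : realType) (d k : nat) (X : {fset 'rV[R]_d}) :
  (2 <= d)%N -> (2 <= k)%N -> (k <= d)%N ->
  (forall x, x \in X -> dotp x x = 1) ->
  #|` X| = (d + k)%N ->
  (forall x y, x \in X -> y \in X -> x != y -> dotp x y <= 0) ->
  (exists x y, [/\ x \in X, y \in X, x != y & dotp x y = 0]) ->
  exists (X0 : {fset 'rV[R]_d}) (l : nat) (P : 'I_l -> {fset 'rV[R]_d}),
    [/\ (k <= l)%N,
        X0 `<=` X,
        (forall i j, i != j -> [disjoint P i & P j]),
        (forall x, (x \in X `\` X0) <-> (exists i, x \in P i))
      & [/\ #|` X0| = \dim (fspan X0),
             (forall i, #|` P i| = (\dim (fspan (P i))).+1),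
             (forall i, span_orth X0 (P i))
           & (forall i j, i != j -> span_orth (P i) (P j))]].
Proof.
(* Neither the unit norms nor the attained value 0 are needed: every finite
   obtuse set decomposes. *)
move=> _ _ _ _ cardX obtX _.
have [X0 [s [[X0X disj cover] cardX0 cards [orth0 orth] cardXs]]] :=
  obtuse_decomposition obtX.
exists X0, (size s), (fun i => nth fset0 s i); split=> //.
- have dimX : (\dim (fspan X) <= d)%N.
    by have := dimvS (subvf (fspan X)); rewrite dimvf dim_matrix mul1r.
  by rewrite -(leq_add2l d) -cardX cardXs leq_add2r.
- by move=> i j ij; apply: disj.
- move=> x; split=> [/cover [i lt_i xi]|[i xi]]; first by exists (Ordinal lt_i).
  by apply/cover; exists i.
by split=> // [i|i|i j ij]; [apply: cards | apply: orth0 | apply: orth].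
Qed.
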